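(* Let $G=(V,E)$ be a finite, connected, undirected graph with $n\ge 2$ vertices. Then for every $r>0$, $f_{G,r}\le 1-\frac{1}{n+r}$.
   Context: The Moran process on $G$ with mutant fitness $r>0$ is the Markov chain $(X_i)_{i\ge0}$ whose state $X_i\subseteq V$ is the set of vertices occupied by mutants; every other vertex is occupied by a non-mutant of fitness $1$. Write $W(S)=r|S|+|V\setminus S|$ for the total fitness. Given $X_i=S$, one step is: choose a vertex $x$ with probability $r/W(S)$ if $x\in S$ and $1/W(S)$ if $x\notin S$; then choose a neighbour $y$ of $x$ uniformly at random; set $X_{i+1}=S\cup\{y\}$ if $x\in S$ and $X_{i+1}=S\setminus\{y\}$ if $x\notin S$. Fixation means $X_i=V$ for some $i$. For $x\in V$, $f_{G,r}(x)$ is the probability of fixation when $X_0=\{x\}$, and $f_{G,r}=\frac1n\sum_{x\in V}f_{G,r}(x)$ is the fixation probability when the initial single mutant is placed at a uniformly random vertex. *)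

From mathcomp Require Import all_boot.
From Stdlib Require Import Reals.
Set Implicit Arguments. Unset Strict Implicit. Unset Printing Implicit Defensive.

Local Open Scope R_scope.


Section Moran.
Variables (T : finType) (e : rel T) (r : R).

Definition deg (x : T) : R := INR #|[set y | e x y]|.

Definition W (S : {set T}) : R := r * INR #|S| + INR #|~: S|.

(* state after x reproduces onto neighbour y *)
Definition next_state (S : {set T}) (x y : T) : {set T} :=
  if x \in S then y |: S else S :\ y.

Definition trans (S S' : {set T}) : R :=
  \big[Rplus/0]_(x : T) \big[Rplus/0]_(y : T | e x y)
     ((if x \in S then r / W S else 1 / W S) * (1 / deg x) *
      (if next_state S x y == S' then 1 else 0)).

(* hit t S = probability that the chain started at S reaches the state V
   (all vertices mutant) at some time i <= t *)
Fixpoint hit (t : nat) (S : {set T}) : R :=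
  match t with
  | O => if S == setT then 1 else 0
  | t'.+1 => if S == setT then 1
             else \big[Rplus/0]_(S' : {set T}) (trans S S' * hit t' S')
  end.

(* p is the fixation probability f_{G,r}(x): the probability that X_i = V
   for some i, i.e. the limit of the probabilities of fixation by time t *)
Definition is_fixation_prob (x : T) (p : R) : Prop :=
  Un_cv (fun t => hit t [set x]) p.

End Moran.

(* From the state {x} the chain can move in one step to the empty state,
   which never reaches V: a non-mutant neighbour x' of x is selected, with
   probability 1/W({x}), and places its offspring on x, with probability
   1/deg x'.  Hence f(x) <= 1 - temp(x)/W({x}), where
   temp(x) = sum_{x' ~ x} 1/deg x' is the temperature of x.  Since
   W({x}) = r + n - 1 <= n + r and the temperatures of all vertices sum to n
   (every vertex x' contributes deg x' * 1/deg x' = 1), averaging gives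
   f_{G,r} <= 1 - (1/n) * n/(n+r) = 1 - 1/(n+r). *)
From HB Require Import structures.
From mathcomp Require Import all_boot.
From Stdlib Require Import Reals Lra.
Set Implicit Arguments. Unset Strict Implicit.
Delimit Scope nat_scope with N.
Local Open Scope R_scope.

HB.instance Definition _ := Monoid.isComLaw.Build R 0 Rplus
  (fun x y z => sym_eq (Rplus_assoc x y z)) Rplus_comm Rplus_0_l.

Lemma sumR_ge0 (I : Type) (s : seq I) (P : pred I) (F : I -> R) :
  (forall i, P i -> 0 <= F i) -> 0 <= \big[Rplus/0]_(i <- s | P i) F i.
Proof. by move=> F_ge0; apply: big_ind => //; [lra | move=> *; lra]. Qed.

Lemma sumR_le (I : Type) (s : seq I) (P : pred I) (F G : I -> R) :
  (forall i, P i -> F i <= G i) ->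
  \big[Rplus/0]_(i <- s | P i) F i <= \big[Rplus/0]_(i <- s | P i) G i.
Proof. by move=> le_FG; apply: big_ind2 => //; [lra | move=> *; lra]. Qed.

Lemma sumR_mull (I : Type) (s : seq I) (P : pred I) (F : I -> R) (c : R) :
  \big[Rplus/0]_(i <- s | P i) (c * F i) = c * \big[Rplus/0]_(i <- s | P i) F i.
Proof. by rewrite (big_endo (fun x => c * x) (Rmult_plus_distr_l c) (Rmult_0_r c)). Qed.

Lemma sumR_const (I : finType) (P : pred I) (c : R) :
  \big[Rplus/0]_(i | P i) c = INR #|P| * c.
Proof.
rewrite -sum1_card (big_morph INR plus_INR (erefl (INR 0))) Rmult_comm -sumR_mull.
by apply: eq_bigr => i _; rewrite Rmult_1_r.
Qed.

Lemma sumR_pick (I : finType) (P : pred I) (k : I) (c : R) :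
  \big[Rplus/0]_(i | P i) (c * (if k == i then 1 else 0)) = if P k then c else 0.
Proof.
rewrite big_mkcond (bigD1 k) //= eqxx Rmult_1_r big1 ?Rplus_0_r // => i.
by rewrite eq_sym => /negbTE ->; case: (P i); rewrite ?Rmult_0_r.
Qed.

Lemma Rinv_ge0 (x : R) : 0 <= x -> 0 <= / x.
Proof.
case/Rle_lt_or_eq_dec=> [x_gt0 | <-]; first exact/Rlt_le/Rinv_0_lt_compat.
by rewrite Rinv_0; lra.
Qed.

Lemma deg_card (T : finType) (e : rel T) (x : T) :
  deg e x = INR #|(fun y => e x y)|.
Proof. by rewrite /deg; congr INR; apply: eq_card => y; rewrite inE. Qed.

Lemma deg_gt0 (T : finType) (e : rel T) (x : T) :
  (forall x y : T, connect e x y) -> (2 <= #|T|)%N -> 0 < deg e x.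
Proof.
move=> e_conn T_ge2.
have : (0 < #|[set~ x]|)%N by rewrite cardsC1 -ltnS prednK // (leq_trans _ T_ge2).
case/card_gt0P=> z; rewrite !inE => z_neq_x.
have /connectP[[|y p] /= exy last_z] := e_conn x z.
  by rewrite last_z eqxx in z_neq_x.
case/andP: exy => exy _.
by apply/lt_0_INR/ltP/card_gt0P; exists y; rewrite inE.
Qed.

Section Transitions.
Variables (T : finType) (e : rel T) (r : R).
Hypotheses (r_gt0 : 0 < r) (T_gt0 : (0 < #|T|)%N).

Lemma W_gt0 (S : {set T}) : 0 < W r S.
Proof.
rewrite /W; have := cardsC S.
case: (posnP #|S|) => [-> /= cardSC | S_gt0 _].
  rewrite Rmult_0_r Rplus_0_l; apply/lt_0_INR/ltP; by move: T_gt0; rewrite -cardSC.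
have := pos_INR #|~: S|; have : 0 < INR #|S| by apply/lt_0_INR/ltP.
nra.
Qed.

Definition select (S : {set T}) (x : T) : R :=
  if x \in S then r / W r S else 1 / W r S.

Lemma select_ge0 (S : {set T}) (x : T) : 0 <= select S x.
Proof.
by have := W_gt0 S; rewrite /select; case: ifP => _ W_pos; apply: Rle_mult_inv_pos; lra.
Qed.

Lemma sum_select (S : {set T}) : \big[Rplus/0]_(x : T) select S x = 1.
Proof.
have := W_gt0 S; rewrite /W => W_pos.
rewrite (bigID (fun x => x \in S)) /=.
rewrite (eq_bigr (fun _ => r / W r S)) => [|x]; last by rewrite /select => ->.
rewrite [X in _ + X](eq_bigr (fun _ => 1 / W r S)) => [|x]; last by rewrite /select => /negbTE ->.
rewrite !sumR_const /W.
have -> : #|(fun x => x \in S)| = #|S| by apply: eq_card.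
have -> : #|(fun x => x \notin S)| = #|~: S| by apply: eq_card => x; rewrite inE.
by field; lra.
Qed.

Lemma trans_ge0 (S S' : {set T}) : 0 <= trans e r S S'.
Proof.
apply: sumR_ge0 => x _; apply: sumR_ge0 => y _.
apply: Rmult_le_pos; last by case: ifP => _; lra.
apply: Rmult_le_pos; first exact: select_ge0.
by rewrite /Rdiv Rmult_1_l; apply/Rinv_ge0/pos_INR.
Qed.

Lemma sum_trans_le1 (S : {set T}) :
  \big[Rplus/0]_(S' : {set T}) trans e r S S' <= 1.
Proof.
rewrite -(sum_select S) /trans exchange_big /=.
apply: sumR_le => x _.
under eq_bigr => S' _ do rewrite big_mkcond.
rewrite exchange_big /= -/(select S x).
have offspring y : \big[Rplus/0]_(S' : {set T})
    (if e x y then select S x * (1 / deg e x) *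
       (if next_state S x y == S' then 1 else 0) else 0)
    = if e x y then select S x * (1 / deg e x) else 0.
  by case: (e x y); [rewrite (@sumR_pick _ xpredT) | exact: big1].
rewrite (eq_bigr _ (fun y _ => offspring y)) -big_mkcond sumR_const -deg_card.
have := select_ge0 S x; have := pos_INR #|[set y | e x y]|; rewrite /deg.
case/Rle_lt_or_eq_dec=> [deg_pos | <-] sel_ge0; last by rewrite Rmult_0_l.
by right; field; lra.
Qed.

(* The empty state is absorbing: from it, V is never reached. *)
Lemma hit_set0 (t : nat) : hit e r t set0 = 0.
Proof.
have set0_neqT : (set0 : {set T}) == setT = false.
  case/card_gt0P: T_gt0 => x _.
  by apply/eqP => /setP/(_ x); rewrite !inE.
elim: t => [|t IH] /=; rewrite set0_neqT //.
apply: big1 => S' _; case: (eqVneq S' set0) => [-> | S'_neq0].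
  by rewrite IH Rmult_0_r.
suff -> : trans e r set0 S' = 0 by rewrite Rmult_0_l.
rewrite /trans big1 // => x _; rewrite big1 // => y _.
by rewrite /next_state in_set0 set0D eq_sym (negbTE S'_neq0) Rmult_0_r.
Qed.

Lemma hit_bounds (t : nat) (S : {set T}) : 0 <= hit e r t S <= 1.
Proof.
elim: t S => [|t IH] S /=; first by case: ifP => _; lra.
case: ifP => _; first lra.
split.
  by apply: sumR_ge0 => S' _; apply: Rmult_le_pos; [exact: trans_ge0 | case: (IH S')].
apply: Rle_trans (sum_trans_le1 S); apply: sumR_le => S' _.
by have := trans_ge0 S S'; have := IH S'; nra.
Qed.

Lemma hit_le_escape (t : nat) (S : {set T}) :
  S != setT -> hit e r t S <= 1 - trans e r S set0.
Proof.
move=> /negbTE S_neqT; have := sum_trans_le1 S.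
rewrite (bigD1 set0) //=; set stay := (X in _ + X <= 1) => le1.
have stay_ge0 : 0 <= stay by apply: sumR_ge0 => S' _; exact: trans_ge0.
case: t => [|t] /=; rewrite S_neqT; first lra.
rewrite (bigD1 set0) //= hit_set0 Rmult_0_r Rplus_0_l.
apply: Rle_trans (_ : _ <= stay) _; last lra.
by apply: sumR_le => S' _; have := trans_ge0 S S'; have := hit_bounds t S'; nra.
Qed.

End Transitions.

Lemma Un_cv_le (u : nat -> R) (l b : R) :
  Un_cv u l -> (forall t, u t <= b) -> l <= b.
Proof.
move=> u_cv u_le; apply: Rnot_lt_le => b_lt_l.
have [N HN] := u_cv (l - b) ltac:(lra).
have /Rabs_def2 [] := HN N (le_n N); have := u_le N; lra.
Qed.

Section Singleton.
Variables (T : finType) (e : rel T) (r : R).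
Hypotheses (e_irr : irreflexive e) (r_gt0 : 0 < r) (T_ge2 : (2 <= #|T|)%N).

Let T_gt0 : (0 < #|T|)%N. Proof. exact: leq_trans T_ge2. Qed.

(* The temperature of x: the expected number of offspring placed on x when
   every vertex reproduces once onto a uniformly chosen neighbour. *)
Definition temperature (x : T) : R := \big[Rplus/0]_(x' | e x' x) / deg e x'.

(* From {x}, the chain dies out in one step exactly when a neighbour x' of x
   reproduces (probability 1/W({x})) onto x (probability 1/deg x'). *)
Lemma trans_singleton_set0 (x : T) :
  trans e r [set x] set0 = / W r [set x] * temperature x.
Proof.
rewrite /trans /temperature -sumR_mull [RHS]big_mkcond; apply: eq_bigr => x' _.
case: (eqVneq x' x) => [-> | x'_neq_x].
  rewrite e_irr big1 // => y _.
  rewrite /next_state set11 (_ : (y |: _ == _) = false) ?Rmult_0_r //.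
  by apply/negbTE/set0Pn; exists x; rewrite !inE eqxx orbT.
have dies y : (next_state [set x] x' y == set0) = (x == y).
  by rewrite /next_state inE (negbTE x'_neq_x) setD_eq0 sub1set inE.
under eq_bigr => y _ do rewrite dies.
rewrite inE (negbTE x'_neq_x) sumR_pick.
by case: (e x' x) => //; rewrite /Rdiv !Rmult_1_l.
Qed.

Lemma W_singleton_le (x : T) : W r [set x] <= INR #|T| + r.
Proof.
rewrite /W cards1 cardsC1 Rmult_1_r.
have : INR #|T|.-1 <= INR #|T| by apply/le_INR/leP/leq_pred.
lra.
Qed.

Lemma escape_singleton_ge (x : T) :
  temperature x / (INR #|T| + r) <= trans e r [set x] set0.
Proof.
have temp_ge0 : 0 <= temperature x.
  by apply: sumR_ge0 => x' _; apply/Rinv_ge0/pos_INR.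
rewrite trans_singleton_set0 /Rdiv (Rmult_comm (temperature x)).
apply: Rmult_le_compat_r => //.
by apply: Rinv_le_contravar (W_singleton_le x); exact: W_gt0.
Qed.

Lemma fixation_singleton_le (x : T) (p : R) :
  is_fixation_prob e r x p -> p <= 1 - temperature x / (INR #|T| + r).
Proof.
have x_neqT : [set x] != setT.
  by apply/eqP => xT; move: T_ge2; rewrite -cardsT -xT cards1.
move=> /Un_cv_le fix_le; apply: Rle_trans (fix_le _ _) _.
  by move=> t; exact: hit_le_escape.
by have := escape_singleton_ge x; lra.
Qed.

(* Every vertex x' passes total heat deg x' * (1/deg x') = 1 to its
   neighbours, so the temperatures of a graph without isolated vertices
   sum to the number of vertices. *)
Lemma sum_temperature :
  (forall x, 0 < deg e x) -> \big[Rplus/0]_(x : T) temperature x = INR #|T|.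
Proof.
move=> deg_pos; rewrite /temperature.
under eq_bigr => x _ do rewrite big_mkcond.
rewrite exchange_big /=.
rewrite (eq_bigr (fun _ => 1)) => [|x' _]; last first.
  by rewrite -big_mkcond sumR_const -deg_card Rinv_r //; apply/Rgt_not_eq/deg_pos.
by rewrite sumR_const Rmult_1_r; congr INR; apply: eq_card.
Qed.

End Singleton.

Theorem lemma2 (T : finType) (e : rel T)
  (e_sym : symmetric e) (e_irr : irreflexive e)
  (e_conn : forall x y : T, connect e x y)
  (hn : (2 <= #|T|)%N)
  (r : R) (hr : Rlt 0 r)
  (f : T -> R) (hf : forall x : T, is_fixation_prob e r x (f x)) :
  Rle (Rmult (Rinv (INR #|T|)) (\big[Rplus/R0]_(x : T) f x))
      (Rminus 1 (Rinv (Rplus (INR #|T|) r))).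
Proof.
set n := INR #|T|.
have n_gt0 : 0 < n by apply/lt_0_INR/ltP; exact: leq_trans hn.
have sum_temp : \big[Rplus/0]_(x : T) temperature e x = n.
  by apply: sum_temperature => x; exact: deg_gt0.
have sum_f_le : \big[Rplus/0]_(x : T) f x + / (n + r) * n <= n.
  rewrite -[X in _ + _ * X <= _]sum_temp -sumR_mull -big_split /=.
  apply: Rle_trans (_ : _ <= \big[Rplus/0]_(x : T) 1) _.
    apply: sumR_le => x _; have := fixation_singleton_le e_irr hr hn (hf x).
    rewrite /Rdiv Rmult_comm -/n; lra.
  by rewrite sumR_const Rmult_1_r; right; congr INR; apply: eq_card.
apply: (Rmult_le_reg_l n) => //.
rewrite -Rmult_assoc Rinv_r ?Rmult_1_l; last lra.
rewrite Rmult_minus_distr_l Rmult_1_r (Rmult_comm n).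
by move: sum_f_le; set S := \big[Rplus/0]_(x : T) f x; lra.
Qed.
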